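(* Assume the setting in the context, and in addition $\phi_\alpha=\phi_\beta$. Suppose $A:=\phi_\alpha-\gamma\phi'_\alpha$ and $B:=\phi_\beta-\gamma\phi'_\beta$ have opposite signs, so that both $\theta_{\pi_1}$ and $\theta_{\pi_2}$ exist and are distinct, and let $\Omega=\{\lambda\theta_{\pi_1}+(1-\lambda)\theta_{\pi_2}:\lambda\in(0,1)\}$ be the open segment between them. Write $d=\theta_{\pi_1}-\theta_{\pi_2}$ and, for nonzero $x,y\in\mathbb{R}^2$, $\cos(x,y)=\langle x,y\rangle/(\|x\|\|y\|)$. (1) If $A>0$ and $B<0$, then $\cos\big(d,F^{\pi_2}_{\mathrm{semi}}(\theta)\big)=1$ for every $\theta\in\Omega$ with $\theta_2\ge\theta_1$, and $\cos\big(d,F^{\pi_1}_{\mathrm{semi}}(\theta)\big)=1$ for every $\theta\in\Omega$ with $\theta_2\le\theta_1$. (2) If $A<0$ and $B>0$, then $\cos\big(d,F^{\pi_2}_{\mathrm{semi}}(\theta)\big)=-1$ for every $\theta\in\Omega$ with $\theta_2\ge\theta_1$, and $\cos\big(d,F^{\pi_1}_{\mathrm{semi}}(\theta)\big)=-1$ for every $\theta\in\Omega$ with $\theta_2\le\theta_1$. (In particular the relevant semi-gradient fields are nonzero on these sets, and along the segment they point toward $\theta_{\pi_1}$ in case (1) and toward $\theta_{\pi_2}$ in case (2).)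
   Context: Let $\gamma\in(0,1)$, $C<0$, $\phi_\alpha,\phi_\beta>0$, $\phi'_\alpha,\phi'_\beta\ge0$ with $\phi_\alpha-\gamma\phi'_\alpha\ne0$ and $\phi_\beta-\gamma\phi'_\beta\ne0$. These are the scalar embeddings $\phi(s_\alpha),\phi(s_\beta),\phi(s'_\alpha),\phi(s'_\beta)$ of the states in a two-sample dataset $\{(s_\alpha,a_1,s'_\alpha,C),(s_\beta,a_2,s'_\beta,C)\}$ from an MDP with actions $\{a_1,a_2\}$ and discount $\gamma$, with linear parameterization $Q(s,a)=\phi(s)\theta(a)$, $\theta=(\theta_1,\theta_2)=(\theta(a_1),\theta(a_2))\in\mathbb{R}^2$. Policy $\pi_1$ corresponds to the region $\theta_1\ge\theta_2$ and $\pi_2$ to $\theta_1\le\theta_2$. Negative semi-gradients: $F^{\pi_1}_{\mathrm{semi}}(\theta)=\big(-\phi_\alpha(\phi_\alpha\theta_1-C-\gamma\phi'_\alpha\theta_1),\ -\phi_\beta(\phi_\beta\theta_2-C-\gamma\phi'_\beta\theta_1)\big)$, $F^{\pi_2}_{\mathrm{semi}}(\theta)=\big(-\phi_\alpha(\phi_\alpha\theta_1-C-\gamma\phi'_\alpha\theta_2),\ -\phi_\beta(\phi_\beta\theta_2-C-\gamma\phi'_\beta\theta_2)\big)$. Solutions of the Bellman equations: with $A=\phi_\alpha-\gamma\phi'_\alpha$, $B=\phi_\beta-\gamma\phi'_\beta$, $\theta_{\pi_1}=\Big(\frac{C}{A},\ \frac{C}{\phi_\beta}+\frac{C\gamma\phi'_\beta}{\phi_\beta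 A}\Big)$ (the zero of $F^{\pi_1}_{\mathrm{semi}}$, lying in $\{\theta_1\ge\theta_2\}$ iff $B/A\le1$) and $\theta_{\pi_2}=\Big(\frac{C}{\phi_\alpha}+\frac{C\gamma\phi'_\alpha}{\phi_\alpha B},\ \frac{C}{B}\Big)$ (the zero of $F^{\pi_2}_{\mathrm{semi}}$, lying in $\{\theta_1\le\theta_2\}$ iff $A/B\le1$). *)

From Stdlib Require Import Reals.
Open Scope R_scope.

(* theta = (theta_1, theta_2) = (theta(a1), theta(a2)) *)

Definition inner2 (x y : R * R) : R := fst x * fst y + snd x * snd y.
Definition norm2 (x : R * R) : R := sqrt (inner2 x x).
Definition cos_vec (x y : R * R) : R := inner2 x y / (norm2 x * norm2 y).

Definition vsub (x y : R * R) : R * R := (fst x - fst y, snd x - snd y).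
Definition vcomb (l : R) (x y : R * R) : R * R :=
  (l * fst x + (1 - l) * fst y, l * snd x + (1 - l) * snd y).

(* Negative semi-gradients. pa = phi(s_alpha), pb = phi(s_beta),
   pa' = phi(s'_alpha), pb' = phi(s'_beta). *)
Definition F_semi_pi1 (g C pa pb pa' pb' : R) (th : R * R) : R * R :=
  (- pa * (pa * fst th - C - g * pa' * fst th),
   - pb * (pb * snd th - C - g * pb' * fst th)).
Definition F_semi_pi2 (g C pa pb pa' pb' : R) (th : R * R) : R * R :=
  (- pa * (pa * fst th - C - g * pa' * snd th),
   - pb * (pb * snd th - C - g * pb' * snd th)).

(* Bellman solutions, with A = pa - g pa', B = pb - g pb'. *)
Definition theta_pi1 (g C pa pb pa' pb' : R) : R * R :=
  (C / (pa - g * pa'), C / pb + C * g * pb' / (pb * (pa - g * pa'))).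
Definition theta_pi2 (g C pa pb pa' pb' : R) : R * R :=
  (C / pa + C * g * pa' / (pa * (pb - g * pb')), C / (pb - g * pb')).

Definition in_Omega (g C pa pb pa' pb' : R) (th : R * R) : Prop :=
  exists l, 0 < l < 1 /\
    th = vcomb l (theta_pi1 g C pa pb pa' pb') (theta_pi2 g C pa pb pa' pb').

From Stdlib Require Import Reals Lra.
Open Scope R_scope.

(* Each semi-gradient field is affine and vanishes at its own Bellman solution,
   so on the segment it is a multiple of its value at the other endpoint.  When
   [phi_alpha = phi_beta] the difference [d] of the two solutions is parallel
   to [(phi'_alpha, phi'_beta)], which is an eigenvector of the linear parts of
   both fields; hence [F^pi2] equals [lambda (-phi B) d] and [F^pi1] equals
   [(1 - lambda) (phi A) d] at the point of parameter [lambda], and the cosine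
   is the sign of that scalar on the whole segment, whatever the order of
   [theta_1] and [theta_2]. *)

Definition vscale (c : R) (x : R * R) : R * R := (c * fst x, c * snd x).

Lemma inner2_self_pos (x : R * R) : fst x <> 0 \/ snd x <> 0 -> 0 < inner2 x x.
Proof.
  unfold inner2; intros [Hx | Hx].
  - pose proof (Rsqr_pos_lt _ Hx); pose proof (Rle_0_sqr (snd x)); unfold Rsqr in *; lra.
  - pose proof (Rsqr_pos_lt _ Hx); pose proof (Rle_0_sqr (fst x)); unfold Rsqr in *; lra.
Qed.

Lemma cos_vec_vscale (x : R * R) (c : R) :
  0 < inner2 x x -> c <> 0 -> cos_vec x (vscale c x) = c / Rabs c.
Proof.
  intros Hx Hc; unfold cos_vec, norm2.
  replace (inner2 x (vscale c x)) with (c * inner2 x x)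
    by (unfold inner2, vscale; simpl; ring).
  replace (inner2 (vscale c x) (vscale c x)) with (Rsqr c * inner2 x x)
    by (unfold inner2, vscale, Rsqr; simpl; ring).
  rewrite sqrt_mult, sqrt_Rsqr_abs by (try apply Rle_0_sqr; lra).
  assert (Hsqrt : 0 < sqrt (inner2 x x)) by (apply sqrt_lt_R0; lra).
  assert (Habs : 0 < Rabs c) by (apply Rabs_pos_lt; auto).
  rewrite <- (sqrt_sqrt (inner2 x x)) at 1 by lra.
  field; lra.
Qed.

Lemma cos_vec_vscale_pos (x : R * R) (c : R) :
  0 < inner2 x x -> 0 < c -> cos_vec x (vscale c x) = 1.
Proof.
  intros Hx Hc; rewrite cos_vec_vscale, Rabs_right by lra; field; lra.
Qed.

Lemma cos_vec_vscale_neg (x : R * R) (c : R) :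
  0 < inner2 x x -> c < 0 -> cos_vec x (vscale c x) = -1.
Proof.
  intros Hx Hc; rewrite cos_vec_vscale, Rabs_left by lra; field; lra.
Qed.

Section EqualFeatures.

Variables g C p pa' pb' : R.
Hypothesis Hp : 0 < p.
Hypothesis HA : p - g * pa' <> 0.
Hypothesis HB : p - g * pb' <> 0.

Local Notation A := (p - g * pa').
Local Notation B := (p - g * pb').
Local Notation theta1 := (theta_pi1 g C p p pa' pb').
Local Notation theta2 := (theta_pi2 g C p p pa' pb').

Lemma theta_pi_diff_parallel :
  vsub theta1 theta2 = vscale (C * (B - A) / (p * A * B)) (g * pa', g * pb').
Proof.
  unfold vsub, vscale, theta_pi1, theta_pi2; simpl.
  f_equal; field; repeat split; lra.
Qed.

Lemma theta_pi_diff_nonzero :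
  C <> 0 -> 0 < g -> A * B < 0 -> 0 < inner2 (vsub theta1 theta2) (vsub theta1 theta2).
Proof.
  intros HC Hg HAB.
  assert (Hk : C * (B - A) / (p * A * B) <> 0).
  { assert (B - A <> 0) by (intro; nra).
    unfold Rdiv; repeat apply Rmult_integral_contrapositive_currified; auto.
    apply Rinv_neq_0_compat; repeat apply Rmult_integral_contrapositive_currified; lra. }
  (* [pa' = pb' = 0] would force [A = B = p > 0]. *)
  assert (Hw : pa' <> 0 \/ pb' <> 0).
  { destruct (Req_dec pa' 0) as [Ha' | Ha']; [right | now left].
    intros Hb'; rewrite Ha', Hb' in HAB; nra. }
  rewrite theta_pi_diff_parallel; apply inner2_self_pos; simpl.
  destruct Hw; [left | right]; apply Rmult_integral_contrapositive_currified;
    auto; apply Rmult_integral_contrapositive_currified; lra.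
Qed.

Lemma F_semi_pi2_segment (l : R) :
  F_semi_pi2 g C p p pa' pb' (vcomb l theta1 theta2)
  = vscale (l * (- p * B)) (vsub theta1 theta2).
Proof.
  unfold F_semi_pi2, vcomb, vscale, vsub, theta_pi1, theta_pi2; simpl.
  f_equal; field; repeat split; lra.
Qed.

Lemma F_semi_pi1_segment (l : R) :
  F_semi_pi1 g C p p pa' pb' (vcomb l theta1 theta2)
  = vscale ((1 - l) * (p * A)) (vsub theta1 theta2).
Proof.
  unfold F_semi_pi1, vcomb, vscale, vsub, theta_pi1, theta_pi2; simpl.
  f_equal; field; repeat split; lra.
Qed.

End EqualFeatures.

Theorem theorem1 (g C pa pb pa' pb' : R) :
  0 < g < 1 -> C < 0 -> 0 < pa -> 0 < pb -> 0 <= pa' -> 0 <= pb' ->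
  pa - g * pa' <> 0 -> pb - g * pb' <> 0 ->
  pa = pb ->
  (pa - g * pa') * (pb - g * pb') < 0 ->
  let d := vsub (theta_pi1 g C pa pb pa' pb') (theta_pi2 g C pa pb pa' pb') in
  (0 < pa - g * pa' -> pb - g * pb' < 0 ->
     (forall th, in_Omega g C pa pb pa' pb' th -> fst th <= snd th ->
        cos_vec d (F_semi_pi2 g C pa pb pa' pb' th) = 1) /\
     (forall th, in_Omega g C pa pb pa' pb' th -> snd th <= fst th ->
        cos_vec d (F_semi_pi1 g C pa pb pa' pb' th) = 1)) /\
  (pa - g * pa' < 0 -> 0 < pb - g * pb' ->
     (forall th, in_Omega g C pa pb pa' pb' th -> fst th <= snd th ->
        cos_vec d (F_semi_pi2 g C pa pb pa' pb' th) = -1) /\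
     (forall th, in_Omega g C pa pb pa' pb' th -> snd th <= fst th ->
        cos_vec d (F_semi_pi1 g C pa pb pa' pb' th) = -1)).
Proof.
  intros Hg HC Hpa _ _ _ HA HB <- HAB d.
  assert (Hd : 0 < inner2 d d) by (apply theta_pi_diff_nonzero; lra).
  split; intros HA1 HB1; split; intros th [l [Hl ->]] _;
    rewrite ?F_semi_pi2_segment, ?F_semi_pi1_segment by lra.
  - apply cos_vec_vscale_pos; [exact Hd | apply Rmult_lt_0_compat; nra].
  - apply cos_vec_vscale_pos; [exact Hd | apply Rmult_lt_0_compat; nra].
  - apply cos_vec_vscale_neg; [exact Hd | rewrite <- (Rmult_0_r l);
      apply Rmult_lt_compat_l; nra].
  - apply cos_vec_vscale_neg; [exact Hd | rewrite <- (Rmult_0_r (1 - l));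
      apply Rmult_lt_compat_l; nra].
Qed.
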